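(* Let $X$ have a pdf $f$ satisfying Conditions (A) and (B) below, and fix the uniform quantizer $Q_{\mathrm{uni}}^\delta$. Then the zero-wait sampler is asymptotically optimal: $$\lim_{\delta\to0}\Big[\mathrm{AoI}(S_{\mathrm z},Q_{\mathrm{uni}}^\delta,F^* )-\inf_S\mathrm{AoI}(S,Q_{\mathrm{uni}}^\delta,F^* )\Big]=0,$$ where the infimum is over all stationary deterministic sampling policies $S$.
   Context: Let $X$ be a real random variable with pdf $f$. Condition (A): $f$ is continuous and differentiable, and its support is a bounded interval $I$. Let $M=\max f$. Condition (B): $\int_I f\log_2^2 f\,dx$ and $-\int_I f\log_2 f\,dx$ exist and are finite. Quantizer. The uniform quantizer $Q_{\mathrm{uni}}^\delta$ partitions $I$ into consecutive cells of length $\delta$, with midpoint representation points. Let $p_i$ be the probability that $X$ lies in cell $i$. Codes. A real-valued code assigns lengths $l_i\in\mathbb R^+$ to the cells, subject to $\sum_i2^{-l_i}\le1$. The random codeword length is $L=l_i$ when $X$ is in cell $i$. Sampling policies. A stationary deterministic sampling policy $S$ is a measurable function $z:[0,\infty)\to[0,W]$, for some fixed $W$, which determines the waiting time $Z=z(L)$. The zero-wait policy $S_{\mathrm z}$ has $z\equiv0$. Objective. The AoI is $\mathrm{AoI}(S,Q,l)=\frac{E[(L+Z)^2]}{2E[L+Z]}+E[L]$, and $\mathrm{AoI}(S,Q,F^* )=\inf_l\mathrm{AoI}(S,Q,l)$, the infimum over real-valued codes. *)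

From HB Require Import structures.
From mathcomp Require Import all_boot all_order all_algebra.
From mathcomp Require Import all_classical all_reals all_analysis.
Unset Printing Implicit Defensive.
Import Order.TTheory GRing.Theory Num.Theory.
Import numFieldNormedType.Exports.
Local Open Scope classical_set_scope.
Local Open Scope ring_scope.

Section AoI.
Context {R : realType}.

Definition log2 (x : R) : R := ln x / ln 2.

Definition condA (f : R -> R) (a b : R) : Prop :=
  [/\ (forall x, 0 <= f x),
      (\int[lebesgue_measure]_(x in [set: R]) (f x)%:E = 1)%E,
      closure [set x | f x != 0] = `[a, b]%classic,
      {within `[a, b], continuous f} &
      {in `]a, b[, forall x, derivable f x 1}].

Definition condB (f : R -> R) (a b : R) : Prop :=
  lebesgue_measure.-integrable `[a, b] (fun x => (f x * (log2 (f x)) ^+ 2)%:E) /\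
  lebesgue_measure.-integrable `[a, b] (fun x => (f x * log2 (f x))%:E).

(* Uniform quantizer of step delta on I = [a,b]: cells
   [a + k delta, a + (k+1) delta) intersected with I, k < ncells. *)
Definition ncells (a b delta : R) : nat := `|Num.ceil ((b - a) / delta)|%N.

Definition cell (a b delta : R) (k : nat) : set R :=
  [set x | a + k%:R * delta <= x < a + k.+1%:R * delta] `&` `[a, b]%classic.

Definition pcell (f : R -> R) (a b delta : R) (k : nat) : R :=
  Rintegral lebesgue_measure (cell a b delta k) f.

(* real-valued codes: positive lengths satisfying Kraft's inequality *)
Definition code (N : nat) (l : 'I_N -> R) : Prop :=
  (forall i, 0 < l i) /\ \sum_(i < N) 2 `^ (- l i) <= 1.

(* stationary deterministic sampling policies with waiting bound W *)
Definition policy (W : R) (z : R -> R) : Prop :=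
  measurable_fun [set x : R | 0 <= x] z /\
  (forall x, 0 <= x -> 0 <= z x <= W).

Definition AoI (f : R -> R) (a b delta : R) (z : R -> R)
    (l : 'I_(ncells a b delta) -> R) : R :=
  let p := pcell f a b delta in
  (\sum_(i < ncells a b delta) p i * (l i + z (l i)) ^+ 2)
    / (2 * \sum_(i < ncells a b delta) p i * (l i + z (l i)))
  + \sum_(i < ncells a b delta) p i * l i.

(* AoI(S, Q_uni^delta, F^* ) = inf over real-valued codes *)
Definition AoI_opt (f : R -> R) (a b delta : R) (z : R -> R) : R :=
  inf [set AoI f a b delta z l | l in code (ncells a b delta)].

Definition zero_wait : R -> R := fun _ => 0.

Definition AoI_gap (f : R -> R) (a b W delta : R) : R :=
  AoI_opt f a b delta zero_wait
  - inf [set AoI_opt f a b delta z | z in policy W].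

End AoI.

(* Write i = -log2 p for the self-information of the quantized source and
   H = E[i] for its entropy.  For any code and any policy with nonnegative
   waiting times, Jensen gives E[(L+Z)^2] / (2 E[L+Z]) >= E[L+Z] / 2 >= E[L] / 2
   and Gibbs' inequality gives E[L] >= H, so the AoI is at least 3H/2; zero
   waiting with the lengths i + eps reaches E[i^2] / (2H) + H + O(eps).  Hence
   the gap lies between 0 and Var(i) / (2H).
   As f <= M, every cell has probability at most M delta, so H >= -log2 (M delta)
   tends to infinity, whereas Var(i) <= E[(i + log2 delta)^2] <= N delta C stays
   bounded, since t ln^2 t is bounded on (0, M] and N delta <= b - a + delta. *)

From HB Require Import structures.
From mathcomp Require Import all_boot all_order all_algebra.
From mathcomp Require Import all_classical all_reals all_analysis.
From mathcomp Require Import ring lra measurable_realfun.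
(* after mathcomp, so that [code] is Defs.code, not constructive_ereal.code *)
From Pilot Require Import Defs.
Import Order.TTheory GRing.Theory Num.Theory.
Import numFieldNormedType.Exports.
Local Open Scope classical_set_scope.
Local Open Scope ring_scope.

Section Logarithm.
Context {R : realType}.
Implicit Types x y : R.

Lemma ln2_gt0 : 0 < ln (2 : R).
Proof. by apply: ln_gt0; rewrite ltr1n. Qed.

Lemma ln2_neq0 : ln (2 : R) != 0.
Proof. exact: lt0r_neq0 ln2_gt0. Qed.

Lemma powR2E x : 2 `^ x = expR (x * ln 2).
Proof. by rewrite /powR pnatr_eq0. Qed.

Lemma log2K x : 0 < x -> 2 `^ log2 x = x.
Proof. by move=> x0; rewrite powR2E /log2 mulfVK ?ln2_neq0 // lnK. Qed.

Lemma log2_powR2 x : log2 (2 `^ x) = x.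
Proof. by rewrite /log2 ln_powR mulfK ?ln2_neq0. Qed.

Lemma log2_div x y : 0 < x -> 0 < y -> log2 (x / y) = log2 x - log2 y.
Proof. by move=> x0 y0; rewrite /log2 ln_div ?posrE // mulrBl. Qed.

Lemma ler_log2 x y : 0 < x -> 0 < y -> (log2 x <= log2 y) = (x <= y).
Proof.
by move=> x0 y0; rewrite /log2 ler_pM2r ?invr_gt0 ?ln2_gt0 // ler_ln ?posrE.
Qed.

Lemma log2_lt0 x : 0 < x < 1 -> log2 x < 0.
Proof. by move=> /ln_lt0 x0; rewrite /log2 pmulr_llt0 // invr_gt0 ln2_gt0. Qed.

Lemma log2_le0 x : x <= 1 -> log2 x <= 0.
Proof. by move=> /ln_le0 x0; rewrite /log2 pmulr_lle0 // invr_gt0 ln2_gt0. Qed.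

(* ln x <= x - 1 at x = 2^-l / q *)
Lemma gibbs_term (q l : R) : 0 <= q ->
  (q - 2 `^ (- l)) / ln 2 <= q * l + q * log2 q.
Proof.
move=> q0; set r := 2 `^ (- l); have r0 : 0 < r by apply: powR_gt0.
have lnr : ln r = - l * ln 2 by rewrite /r ln_powR.
have [->|qn0] := eqVneq q 0.
  by rewrite !mul0r addr0 sub0r mulNr oppr_le0 divr_ge0 // ltW ?ln2_gt0.
have {qn0}qp : 0 < q by rewrite lt0r qn0.
have : q * (ln r - ln q) <= r - q.
  have : ln (r / q) <= r / q - 1.
    have := @le_ln1Dx _ (r / q - 1); rewrite [1 + _]addrC subrK; apply.
    by rewrite ltrBrDl addrN divr_gt0.
  rewrite ln_div ?posrE // => /(ler_wpM2l (ltW qp)).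
  by rewrite [X in _ <= X]mulrBr mulrCA divff ?gt_eqF // !mulr1.
rewrite ler_pdivrMr ?ln2_gt0 // /log2 lnr.
have -> : (q * l + q * (ln q / ln 2)) * ln 2 = q * l * ln 2 + q * ln q.
  by field; exact: ln2_neq0.
nra.
Qed.

Lemma mul_sqr_ln_le (t M : R) : 0 < t <= M -> 1 <= M -> t * ln t ^+ 2 <= 2 + M ^+ 3.
Proof.
move=> /andP[t0 tM] M1; have M3 : 0 <= M ^+ 3 by apply: exprn_ge0; lra.
have [t1|t1] := leP 1 t.
  have lnt0 : 0 <= ln t by apply: ln_ge0.
  have lntt : ln t < t by apply: ln_sublinear.
  have lnt2 : ln t ^+ 2 <= t ^+ 2 by rewrite !expr2; nra.
  have : t * ln t ^+ 2 <= t ^+ 3 by rewrite (exprS t 2) ler_pM2l //; lra.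
  have : t ^+ 3 <= M ^+ 3 by rewrite lerXn2r ?nnegrE //; lra.
  lra.
(* t ln^2 t = x^2 e^-x <= 2 for t = e^-x, since e^x >= 1 + x^2 / 2 *)
set x := - ln t; have x0 : 0 < x by rewrite oppr_gt0 ln_lt0 ?t0.
have -> : t * ln t ^+ 2 = x ^+ 2 / expR x.
  by rewrite /x sqrrN expRN lnK ?posrE // invrK mulrC.
suff : x ^+ 2 / expR x <= 2 by lra.
rewrite ler_pdivrMr ?expR_gt0 //; have := expR_ge1Dxn 1 (ltW x0).
rewrite [2`!]/= (_ : (2%:R : R) = 2) //; lra.
Qed.

Lemma mul_sqr_log2_ratio_le (q d M : R) : 0 < d -> 0 <= q <= M * d -> 1 <= M ->
  q * (log2 q - log2 d) ^+ 2 <= d * ((2 + M ^+ 3) / ln 2 ^+ 2).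
Proof.
move=> d0 /andP[q0 qM] M1.
have C0 : 0 <= (2 + M ^+ 3) / ln 2 ^+ 2.
  by rewrite divr_ge0 ?sqr_ge0 // addr_ge0 // exprn_ge0 //; lra.
have [->|qn0] := eqVneq q 0; first by rewrite mul0r mulr_ge0 // ltW.
have {qn0}qp : 0 < q by rewrite lt0r qn0.
rewrite -log2_div // /log2.
have -> : q * (ln (q / d) / ln 2) ^+ 2 = d * (q / d * ln (q / d) ^+ 2 / ln 2 ^+ 2).
  by field; rewrite ln2_neq0 gt_eqF.
rewrite ler_pM2l // ler_pM2r ?invr_gt0 ?exprn_gt0 ?ln2_gt0 //.
by apply: mul_sqr_ln_le => //; rewrite divr_gt0 //= ler_pdivrMr.
Qed.

End Logarithm.

Lemma zero_wait_policy (R : realType) (W : R) : 0 <= W -> policy W zero_wait.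
Proof. by move=> W0; split=> [|x _]; [exact: measurable_cst | rewrite lexx W0]. Qed.

Section Pmf.
Context {R : realType}.
Variables (N : nat) (p : nat -> R).
Hypothesis p_ge0 : forall i : 'I_N, 0 <= p i.
Hypothesis p_sum1 : \sum_(i < N) p i = 1.

Definition entropy : R := \sum_(i < N) p i * - log2 (p i).

Definition info_moment2 : R := \sum_(i < N) p i * (- log2 (p i)) ^+ 2.

Definition varentropy : R := info_moment2 - entropy ^+ 2.

(* With N := ncells a b delta and p := pcell f a b delta, the following are
   AoI, AoI_opt and AoI_gap of the quantized source, by conversion. *)
Definition AoI_pmf (z : R -> R) (l : 'I_N -> R) : R :=
  (\sum_(i < N) p i * (l i + z (l i)) ^+ 2)
    / (2 * \sum_(i < N) p i * (l i + z (l i)))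
  + \sum_(i < N) p i * l i.

Definition AoI_opt_pmf (z : R -> R) : R := inf [set AoI_pmf z l | l in code N].

Definition AoI_gap_pmf (W : R) : R :=
  AoI_opt_pmf zero_wait - inf [set AoI_opt_pmf z | z in policy W].

Lemma sum_sqr_dev (y : 'I_N -> R) c :
  \sum_(i < N) p i * (y i - c) ^+ 2 =
  \sum_(i < N) p i * y i ^+ 2 - 2 * c * \sum_(i < N) p i * y i + c ^+ 2.
Proof.
have -> : c ^+ 2 = \sum_(i < N) p i * c ^+ 2 by rewrite -mulr_suml p_sum1 mul1r.
rewrite mulr_sumr -sumrB -big_split /=; apply: eq_bigr => i _; ring.
Qed.

Lemma sqr_mean_le (y : 'I_N -> R) :
  (\sum_(i < N) p i * y i) ^+ 2 <= \sum_(i < N) p i * y i ^+ 2.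
Proof.
set m := \sum_(i < N) p i * y i.
have : 0 <= \sum_(i < N) p i * (y i - m) ^+ 2.
  by apply: sumr_ge0 => i _; rewrite mulr_ge0 ?sqr_ge0.
rewrite sum_sqr_dev -/m; nra.
Qed.

Lemma pmf_le1 (i : 'I_N) : p i <= 1.
Proof. by rewrite -p_sum1 (bigD1 i) //= lerDl sumr_ge0. Qed.

Lemma code_mean_gt0 {l : 'I_N -> R} : code N l -> 0 < \sum_(i < N) p i * l i.
Proof.
case=> l_gt0 _; have pl_ge0 (i : 'I_N) : 0 <= p i * l i by rewrite mulr_ge0 // ltW.
rewrite lt0r sumr_ge0 // andbT.
apply/negP => /eqP/(psumr_eq0P (fun i _ => pl_ge0 i)) pl0.
suff : \sum_(i < N) p i = 0 by rewrite p_sum1 => /eqP; rewrite oner_eq0.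
apply: big1 => i _; have /eqP := pl0 i isT.
by rewrite mulf_eq0 (gt_eqF (l_gt0 i)) orbF => /eqP.
Qed.

Lemma entropy_le_code_mean {l : 'I_N -> R} :
  code N l -> entropy <= \sum_(i < N) p i * l i.
Proof.
move=> [_ kraft].
have : \sum_(i < N) (p i - 2 `^ (- l i)) / ln 2 <=
         \sum_(i < N) (p i * l i + p i * log2 (p i)).
  by apply: ler_sum => i _; apply: gibbs_term.
rewrite -mulr_suml sumrB p_sum1 big_split /=.
have : 0 <= (1 - \sum_(i < N) 2 `^ (- l i)) / ln 2.
  by rewrite divr_ge0 ?subr_ge0 // ltW ?ln2_gt0.
have -> : entropy = - \sum_(i < N) p i * log2 (p i).
  by rewrite /entropy -sumrN; apply: eq_bigr => i _; rewrite mulrN.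
lra.
Qed.

Lemma AoI_pmf_ge_entropy (z : R -> R) (l : 'I_N -> R) :
  code N l -> (forall x, 0 <= x -> 0 <= z x) ->
  3 / 2 * entropy <= AoI_pmf z l.
Proof.
move=> cl z_ge0; have := entropy_le_code_mean cl; have := code_mean_gt0 cl.
rewrite /AoI_pmf; set S := \sum_(i < N) _ * l i.
set B := \sum_(i < N) _ * (_ + _); set A := \sum_(i < N) _ * _ ^+ 2.
move=> S_gt0 HS.
have SB : S <= B.
  apply: ler_sum => i _; rewrite ler_wpM2l // lerDl z_ge0 // ltW //.
  by case: cl.
have BA : B ^+ 2 <= A := sqr_mean_le (fun i => l i + z (l i)).
suff : B / 2 <= A / (2 * B) by lra.
by rewrite ler_pdivlMr ?mulr_gt0 //; [nra | lra].
Qed.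

Lemma pmf_size_gt0 : (0 < N)%N.
Proof.
by case: N p_sum1 => [|//]; rewrite big_ord0 => /esym/eqP; rewrite oner_eq0.
Qed.

Lemma shannon_code {eps : R} : 0 < eps -> exists l : 'I_N -> R,
  code N l /\ forall i : 'I_N, p i * l i = p i * (- log2 (p i) + eps).
Proof.
move=> eps0; set c := 2 `^ (- eps); have c0 : 0 < c by apply: powR_gt0.
have c1 : c < 1 by rewrite /c powR2E expR_lt1 mulNr oppr_lt0 mulr_gt0 ?ln2_gt0.
have N1 : 1 <= N%:R :> R by rewrite ler1n pmf_size_gt0.
set r := (1 - c) / N%:R; have r0 : 0 < r by rewrite divr_gt0 ?subr_gt0 //; lra.
have r1 : r < 1 by rewrite ltr_pdivrMr ?mul1r; lra.
(* off the support of p, the lengths -log2 r use up the Kraft slack 1 - c *)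
exists (fun i => if 0 < p i then - log2 (p i) + eps else - log2 r); split; last first.
  move=> i; case: ifPn => // /negbTE; rewrite lt0r p_ge0 andbT => /negbFE/eqP ->.
  by rewrite !mul0r.
split=> [i|].
  case: ifP => _; last by rewrite oppr_gt0 log2_lt0 ?r0.
  by rewrite ltr_wpDl // oppr_ge0 log2_le0 ?pmf_le1.
apply: (@le_trans _ _ (\sum_(i < N) (c * p i + r))).
  apply: ler_sum => i _; case: ifP => pi0.
    by rewrite opprD opprK powRD ?pnatr_eq0 ?implybT // log2K // mulrC lerDl ltW.
  by rewrite opprK log2K // lerDr mulr_ge0 // ltW.
rewrite big_split /= -mulr_sumr p_sum1 mulr1 sumr_const card_ord -mulr_natl /r.
by rewrite mulrCA divff ?mulr1 ?gt_eqF; lra.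
Qed.

Lemma AoI_pmf_zero_wait_shifted_code_le {l : 'I_N -> R} {c : R} :
  0 < entropy -> 0 <= c ->
  (forall i : 'I_N, p i * l i = p i * (- log2 (p i) + c)) ->
  AoI_pmf zero_wait l <= info_moment2 / (2 * entropy) + entropy + 2 * c.
Proof.
move=> H0 c0 pl; rewrite /AoI_pmf /zero_wait.
under eq_bigr do rewrite addr0; under [X in _ / (2 * X)]eq_bigr do rewrite addr0.
have -> : \sum_(i < N) p i * l i = entropy + c.
  under eq_bigr do rewrite pl mulrDr.
  by rewrite big_split /= -mulr_suml p_sum1 mul1r.
have -> : \sum_(i < N) p i * l i ^+ 2 = info_moment2 + 2 * c * entropy + c ^+ 2.
  have -> : \sum_(i < N) p i * l i ^+ 2 =
            \sum_(i < N) p i * (- log2 (p i) - - c) ^+ 2.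
    apply: eq_bigr => i _; have [->|pi0] := eqVneq (p i) 0; first by rewrite !mul0r.
    by rewrite opprK -(mulfI pi0 (pl i)).
  by rewrite sum_sqr_dev sqrrN /info_moment2 /entropy; ring.
have E2_ge0 : 0 <= info_moment2 by apply: sumr_ge0 => i _; rewrite mulr_ge0 ?sqr_ge0.
set t := info_moment2 / (2 * entropy).
have t0 : 0 <= t by rewrite divr_ge0 // ltW ?mulr_gt0.
have E2t : info_moment2 = t * (2 * entropy) by rewrite /t divfK // gt_eqF ?mulr_gt0.
suff : (info_moment2 + 2 * c * entropy + c ^+ 2) / (2 * (entropy + c)) <= t + c by lra.
rewrite ler_pdivrMr; last by rewrite mulr_gt0 ?ltr0Sn ?ltr_wpDr.
rewrite E2t; nra.
Qed.

Lemma AoI_opt_pmf_ge_entropy z : (forall x, 0 <= x -> 0 <= z x) ->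
  3 / 2 * entropy <= AoI_opt_pmf z.
Proof.
move=> z_ge0; apply: lb_le_inf; last by move=> _ [l cl <-]; exact: AoI_pmf_ge_entropy.
by have [l [cl _]] := shannon_code ltr01; exists (AoI_pmf z l), l.
Qed.

Lemma AoI_opt_pmf_zero_wait_le : 0 < entropy ->
  AoI_opt_pmf zero_wait <= info_moment2 / (2 * entropy) + entropy.
Proof.
move=> H0; have lb : has_lbound [set AoI_pmf zero_wait l | l in code N].
  by exists (3 / 2 * entropy) => _ [l cl <-]; apply: AoI_pmf_ge_entropy.
apply/ler_addgt0Pr => e e0.
have e2 : 0 < e / 2 by rewrite divr_gt0.
have [l [cl pl]] := shannon_code e2.
have Al : [set AoI_pmf zero_wait l | l in code N] (AoI_pmf zero_wait l) by exists l.
apply: le_trans (ge_inf lb Al) _.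
apply: le_trans (AoI_pmf_zero_wait_shifted_code_le H0 (ltW e2) pl) _; lra.
Qed.

Lemma AoI_gap_pmf_le {W : R} : 0 <= W -> 0 < entropy ->
  0 <= AoI_gap_pmf W <= varentropy / (2 * entropy).
Proof.
move=> W0 H0; set T := [set AoI_opt_pmf z | z in policy W].
have T0 : T (AoI_opt_pmf zero_wait) by exists zero_wait; first exact: zero_wait_policy.
have lbT : lbound T (3 / 2 * entropy).
  by move=> _ [z [_ z_ge0] <-]; apply: AoI_opt_pmf_ge_entropy => x /z_ge0/andP[].
have T_ge : 3 / 2 * entropy <= inf T.
  by apply: lb_le_inf => //; exists (AoI_opt_pmf zero_wait).
have T_le : inf T <= AoI_opt_pmf zero_wait.
  by apply: ge_inf T0; exists (3 / 2 * entropy).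
have := AoI_opt_pmf_zero_wait_le H0.
have -> : varentropy / (2 * entropy) =
          info_moment2 / (2 * entropy) + entropy - 3 / 2 * entropy.
  by rewrite /varentropy; field; rewrite gt_eqF.
by rewrite /AoI_gap_pmf -/T => ?; apply/andP; split; lra.
Qed.

Lemma varentropy_ge0 : 0 <= varentropy.
Proof. by rewrite subr_ge0 (sqr_mean_le (fun i => - log2 (p i))). Qed.

Lemma varentropy_le m : varentropy <= \sum_(i < N) p i * (log2 (p i) - m) ^+ 2.
Proof.
under eq_bigr do rewrite -sqrrN opprD.
rewrite (sum_sqr_dev (fun i => - log2 (p i))) /varentropy -/info_moment2 -/entropy.
by have := sqr_ge0 (entropy + m); rewrite sqrrD; lra.
Qed.

Lemma neg_log2_le_entropy {q : R} : 0 < q -> (forall i : 'I_N, p i <= q) ->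
  - log2 q <= entropy.
Proof.
move=> q0 pq; rewrite -[- log2 q]mul1r -p_sum1 mulr_suml; apply: ler_sum => i _.
have [->|pi0] := eqVneq (p i) 0; first by rewrite !mul0r.
by rewrite ler_wpM2l // lerN2 ler_log2 // lt0r pi0 p_ge0.
Qed.

Lemma sum_sqr_log2_ratio_le {d M : R} :
  0 < d -> 1 <= M -> (forall i : 'I_N, p i <= M * d) ->
  \sum_(i < N) p i * (log2 (p i) - log2 d) ^+ 2 <=
  N%:R * (d * ((2 + M ^+ 3) / ln 2 ^+ 2)).
Proof.
move=> d0 M1 pM.
apply: (@le_trans _ _ (\sum_(i < N) d * ((2 + M ^+ 3) / ln 2 ^+ 2))).
  by apply: ler_sum => i _; apply: mul_sqr_log2_ratio_le; rewrite ?p_ge0 ?pM.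
by rewrite sumr_const card_ord mulr_natl.
Qed.

Lemma AoI_gap_pmf_le_log2 {W d M : R} : 0 <= W -> 0 < d -> 1 <= M -> M * d < 1 ->
  (forall i : 'I_N, p i <= M * d) ->
  0 <= AoI_gap_pmf W <=
  N%:R * (d * ((2 + M ^+ 3) / ln 2 ^+ 2)) / (2 * - log2 (M * d)).
Proof.
move=> W0 d0 M1 Md1 pM; set K := N%:R * _.
have Md0 : 0 < M * d by rewrite mulr_gt0 //; lra.
have L0 : 0 < - log2 (M * d) by rewrite oppr_gt0 log2_lt0 // Md0.
have H0 := lt_le_trans L0 (neg_log2_le_entropy Md0 pM).
have VK : varentropy <= K.
  exact: le_trans (varentropy_le (log2 d)) (sum_sqr_log2_ratio_le d0 M1 pM).
have /andP[-> gapV] := AoI_gap_pmf_le W0 H0; apply: le_trans gapV _.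
apply: (@le_trans _ _ (K / (2 * entropy))).
  by rewrite ler_pM2r // invr_gt0 mulr_gt0.
rewrite ler_wpM2l ?(le_trans varentropy_ge0 VK) // lef_pV2 ?posrE ?mulr_gt0 //.
by rewrite ler_pM2l // neg_log2_le_entropy.
Qed.

End Pmf.

Section Cells.
Context {R : realType} {a b d : R}.
Local Notation mu := (@lebesgue_measure R).
Hypothesis d_gt0 : 0 < d.

Lemma cellE k :
  cell a b d k = `[a + k%:R * d, a + k.+1%:R * d[%classic `&` `[a, b]%classic.
Proof.
by rewrite /cell; congr (_ `&` _); apply/seteqP; split=> x; rewrite /= in_itv.
Qed.

Lemma measurable_cell k : measurable (cell a b d k).
Proof. by rewrite cellE; apply: measurableI; exact: measurable_itv. Qed.

Lemma cell_sub k : cell a b d k `<=` `[a, b]%classic.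
Proof. by move=> x []. Qed.

Lemma cell_measure_le k : (mu (cell a b d k) <= d%:E)%E.
Proof.
apply: (@le_trans _ _ (mu `[a + k%:R * d, a + k.+1%:R * d[%classic)).
  apply: le_measure; rewrite ?inE; [exact: measurable_cell|exact: measurable_itv|].
  by rewrite cellE; apply: subIsetl.
rewrite lebesgue_measure_itv /= lte_fin.
have -> : a + k.+1%:R * d = a + k%:R * d + d by rewrite -nat1r; ring.
by rewrite ltrDl d_gt0 -EFinB lee_fin addrAC subrr add0r.
Qed.

Lemma cell_inj {k k' : nat} {x : R} : cell a b d k x -> cell a b d k' x -> k = k'.
Proof.
move=> [/andP[k1 k2] _] [/andP[k'1 k'2] _].
have le i j : a + i%:R * d <= x -> x < a + j.+1%:R * d -> (i <= j)%N.
  by move=> hi hj; rewrite -ltnS -(ltr_nat R) -(ltr_pM2r d_gt0); lra.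
by apply/eqP; rewrite eqn_leq (le _ _ k1 k'2) (le _ _ k'1 k2).
Qed.

Lemma ncellsE : a <= b -> (ncells a b d)%:R = (Num.ceil ((b - a) / d))%:~R :> R.
Proof.
move=> ab; have ba0 : 0 <= (b - a) / d by rewrite divr_ge0 ?subr_ge0 // ltW.
by rewrite /ncells natr_absz ger0_norm // ceil_ge0 (lt_le_trans _ ba0) ?ltrN10.
Qed.

Lemma ncells_ge : a <= b -> (b - a) / d <= (ncells a b d)%:R.
Proof. by move=> ab; rewrite ncellsE // ceil_ge. Qed.

Lemma ncells_mul_le : a <= b -> (ncells a b d)%:R * d <= b - a + d.
Proof.
move=> ab; rewrite ncellsE // -ler_pdivlMr // [X in _ <= X]mulrDl mulfV ?gt_eqF //.
by have /andP[/ltW + _] := ceil_itv ((b - a) / d); rewrite intrB lerBlDr.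
Qed.

Lemma itv_co_sub_cells : a <= b ->
  `[a, b[%classic `<=` \big[setU/set0]_(k < ncells a b d) cell a b d k.
Proof.
move=> ab x; rewrite /= in_itv /= => /andP[ax xb].
set y := (x - a) / d; have y0 : 0 <= y by rewrite divr_ge0 ?subr_ge0 // ltW.
have yN : (Num.truncn y < ncells a b d)%N.
  rewrite truncn_lt_nat //; apply: lt_le_trans (ncells_ge ab).
  by rewrite ltr_pM2r ?invr_gt0 // ltrD2r.
rewrite -bigcup_seq; exists (Ordinal yN); first by rewrite /= mem_index_enum.
have := truncn_itv y0; rewrite /y ler_pdivlMr // ltr_pdivrMr // => /andP[k1 k2].
by split; rewrite /= ?in_itv /=; apply/andP; split; lra.
Qed.

End Cells.

Section UniformQuantizer.
Context {R : realType} {f : R -> R} {a b : R}.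
Local Notation mu := (@lebesgue_measure R).
Hypothesis hA : condA f a b.

Lemma condA_ge0 x : 0 <= f x.
Proof. by case: hA. Qed.

Lemma condA_eq0 x : ~ `[a, b]%classic x -> f x = 0.
Proof.
case: hA => _ _ supp _ _ nx; apply/eqP; apply: contra_notT nx => fx.
by rewrite -supp; apply: subset_closure.
Qed.

Lemma condA_measurable : measurable_fun `[a, b]%classic f.
Proof.
by case: hA => _ _ _ fc _; exact: subspace_continuous_measurable_fun.
Qed.

Lemma condA_integral_itv : (\int[mu]_(x in `[a, b]%classic) (f x)%:E = 1)%E.
Proof.
case: (hA) => _ <- _ _ _; rewrite integral_mkcond; congr integral.
apply: funext => x; rewrite /patch; case: ifPn => // /negP xab.
by rewrite condA_eq0 // => ?; apply: xab; rewrite inE.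
Qed.

Lemma condA_le : a <= b.
Proof.
rewrite leNgt; apply/negP => ba; have := condA_integral_itv.
rewrite set_itv_ge ?integral_set0; last by rewrite bnd_simp -ltNge.
by move=> /esym/eqP; rewrite onee_eq0.
Qed.

Lemma condA_bounded : exists2 M, 1 <= M & forall x, `[a, b]%classic x -> f x <= M.
Proof.
case: hA => _ _ _ fc _; have [c _ fc_max] := EVT_max condA_le fc.
exists (Num.max 1 (f c)) => [|x xab]; first by rewrite le_max lexx.
by rewrite le_max fc_max ?orbT ?inE.
Qed.

Lemma integral_cell_le d M k : 0 < d -> 0 <= M ->
  (forall x, `[a, b]%classic x -> f x <= M) ->
  (\int[mu]_(x in cell a b d k) (f x)%:E <= (M * d)%:E)%E.
Proof.
move=> d0 M0 fM; have mc : measurable (cell a b d k) := measurable_cell k.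
apply: (@le_trans _ _ (\int[mu]_(x in cell a b d k) M%:E)%E).
  apply: ge0_le_integral => //.
  - by move=> x _; rewrite lee_fin condA_ge0.
  - apply/measurable_EFinP.
    exact: measurable_funS (measurable_itv _) (cell_sub _) condA_measurable.
  - by move=> x cx; rewrite lee_fin fM //; apply: cell_sub cx.
by rewrite integral_cst // EFinM lee_pmul // cell_measure_le.
Qed.

Lemma integral_cellE d k : 0 < d ->
  (\int[mu]_(x in cell a b d k) (f x)%:E = (pcell f a b d k)%:E)%E.
Proof.
move=> d0; have [M M1 fM] := condA_bounded; have M0 : 0 <= M by lra.
rewrite /pcell /Rintegral fineK // ge0_fin_numE.
  exact: le_lt_trans (integral_cell_le d M k d0 M0 fM) (ltry _).
by apply: integral_ge0 => x _; rewrite lee_fin condA_ge0.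
Qed.

Lemma pcell_ge0 d k : 0 < d -> 0 <= pcell f a b d k.
Proof.
move=> d0; rewrite -lee_fin -integral_cellE //.
by apply: integral_ge0 => x _; rewrite lee_fin condA_ge0.
Qed.

Lemma pcell_le d M k : 0 < d -> 0 <= M ->
  (forall x, `[a, b]%classic x -> f x <= M) -> pcell f a b d k <= M * d.
Proof. by move=> d0 M0 fM; rewrite -lee_fin -integral_cellE // integral_cell_le. Qed.

Lemma sum_pcell d : 0 < d -> \sum_(k < ncells a b d) pcell f a b d k = 1.
Proof.
move=> d0; set D := \big[setU/set0]_(k < ncells a b d) cell a b d k.
have mD : measurable D by apply: bigsetU_measurable => k _; exact: measurable_cell.
have Dab : D `<=` `[a, b]%classic by rewrite /D -bigcup_seq => x [k _]; apply: cell_sub.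
have mf (A : set R) : measurable A -> A `<=` `[a, b]%classic ->
    measurable_fun A (fun x => (f x)%:E).
  move=> mA Aab; apply/measurable_EFinP.
  exact: measurable_funS (measurable_itv _) Aab condA_measurable.
have : (\int[mu]_(x in D) (f x)%:E = 1)%E.
  apply/le_anti/andP; split.
    rewrite -condA_integral_itv; apply: (ge0_subset_integral mu mD) => //.
    - exact: mf.
    - by move=> x _; rewrite lee_fin condA_ge0.
  rewrite -condA_integral_itv -integral_itv_bndo_bndc; last first.
    by apply: mf => //; exact: subset_itv_co_cc.
  apply: (ge0_subset_integral mu _ mD) => //.
  - exact: mf.
  - by move=> x _; rewrite lee_fin condA_ge0.
  - exact: itv_co_sub_cells d0 condA_le.
rewrite ge0_integral_bigsetU ?index_enum_uniq //; last first.
- by move=> x _; rewrite lee_fin condA_ge0.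
- exact: mf mD Dab.
- by move=> i j _ _ [x [xi xj]]; apply: val_inj; exact: (cell_inj d0 xi xj).
- exact: measurable_cell.
by under eq_bigr do rewrite integral_cellE //; rewrite sumEFin => -[].
Qed.

Lemma AoI_gap_le_inv_log2 W d M : 0 <= W -> 0 < d -> 1 <= M -> M * d < 1 ->
  (forall x, `[a, b]%classic x -> f x <= M) ->
  0 <= AoI_gap f a b W d <=
  (b - a + 1) * ((2 + M ^+ 3) / ln 2 ^+ 2) / 2 * (- log2 (M * d))^-1.
Proof.
move=> W0 d0 M1 Md1 fM; set C := (2 + M ^+ 3) / ln 2 ^+ 2.
have C0 : 0 <= C by rewrite divr_ge0 ?sqr_ge0 // addr_ge0 // exprn_ge0 //; lra.
have pM (k : 'I_(ncells a b d)) : pcell f a b d k <= M * d.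
  by apply: pcell_le => //; lra.
have /andP[-> gap_le] := AoI_gap_pmf_le_log2 _ _
  (fun k => pcell_ge0 d k d0) (sum_pcell d d0) W0 d0 M1 Md1 pM.
apply: le_trans gap_le _.
have L0 : 0 < - log2 (M * d) by rewrite oppr_gt0 log2_lt0 // Md1 mulr_gt0 //; lra.
rewrite ler_pdivrMr ?mulr_gt0 // (_ : _ / 2 * _ * _ = (b - a + 1) * C); last first.
  by field; rewrite -oppr_eq0 gt_eqF.
rewrite mulrA ler_wpM2r //; apply: le_trans (ncells_mul_le d0 condA_le) _.
by rewrite lerD2l; nra.
Qed.

End UniformQuantizer.

Lemma neg_log2_cvgy {R : realType} {M : R} : 0 < M ->
  - log2 (M * d) @[d --> 0^'+] --> +oo.
Proof.
move=> M0; apply/cvgryPger => A _; near=> d.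
have d0 : 0 < d by near: d; exact: nbhs_right_gt.
have dA : d <= 2 `^ (- A) / M.
  by near: d; apply: nbhs_right_le; rewrite divr_gt0 ?powR_gt0.
rewrite lerNr -[- A]log2_powR2 ler_log2 ?mulr_gt0 ?powR_gt0 //.
by rewrite mulrC -ler_pdivlMr.
Unshelve. all: by end_near.
Qed.

Lemma near0_mul_lt1 {R : realType} {M : R} : 0 < M ->
  \forall d \near 0^'+, 0 < d /\ M * d < 1.
Proof.
move=> M0; near=> d; split; first by near: d; exact: nbhs_right_gt.
by rewrite -ltr_pdivlMl // mulr1; near: d; apply: nbhs_right_lt; rewrite invr_gt0.
Unshelve. all: by end_near.
Qed.

Lemma inv_neg_log2_cvg0 {R : realType} {M : R} : 0 < M ->
  (- log2 (M * d))^-1 @[d --> 0^'+] --> 0.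
Proof.
move=> M0; apply/gtr0_cvgV0; last exact: neg_log2_cvgy.
near=> d; have [d0 Md1] : 0 < d /\ M * d < 1 by near: d; exact: near0_mul_lt1.
by rewrite oppr_gt0 log2_lt0 // Md1 mulr_gt0.
Unshelve. all: by end_near.
Qed.

Theorem theorem4 (R : realType) (f : R -> R) (a b W : R) :
  0 <= W -> condA f a b -> condB f a b ->
  AoI_gap f a b W delta @[delta --> 0^'+] --> 0.
Proof.
move=> W0 hA _; have [M M1 fM] := condA_bounded hA; have M0 : 0 < M by lra.
set K := (b - a + 1) * ((2 + M ^+ 3) / ln 2 ^+ 2) / 2.
apply: (@squeeze_cvgr _ _ _ _ (cst 0) (fun d => K * (- log2 (M * d))^-1)).
- near=> d; have [d0 Md1] : 0 < d /\ M * d < 1 by near: d; exact: near0_mul_lt1.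
  exact: AoI_gap_le_inv_log2.
- exact: cvg_cst.
- by move/(cvgMl_tmp (a := K)): (inv_neg_log2_cvg0 M0); rewrite mulr0.
Unshelve. all: by end_near.
Qed.
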